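(* Let $R$ be a commutative graded ring, $P$ a homogeneous prime ideal, $S=R\setminus P$ and $M$ a graded $R$-module. Then $S^{-1}M=0$ if and only if $\overline{\mathrm{Hom}}(M,E^g(R/P))=0$.
   Context: $\overline{\mathrm{Hom}}(M,N)=\bigoplus_{i\in\mathbb{Z}}\mathrm{Hom}_{Gr(R)}(M,N(i))$, where $Gr(R)$ is the category of graded $R$-modules with degree-preserving maps and $N(i)$ the grading shift; $E^g$ is the injective envelope in $Gr(R)$. *)

From HB Require Import structures.
From mathcomp Require Import all_boot all_order all_algebra.
Set Implicit Arguments. Unset Strict Implicit. Unset Printing Implicit Defensive.
Import GRing.Theory.
Local Open Scope ring_scope.

Section Grading.
Variable V : zmodType.

Definition subgroupP (A : V -> Prop) : Prop :=
  A 0 /\ forall x y, A x -> A y -> A (x - y).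

(* V = \bigoplus_{i in Z} G i (internal direct sum of subgroups) *)
Definition graded_family (G : int -> V -> Prop) : Prop :=
  (forall i, subgroupP (G i)) /\
  (forall x : V, exists (s : seq int) (f : int -> V),
      uniq s /\ (forall i, G i (f i)) /\ x = \sum_(i <- s) f i) /\
  (forall (s : seq int) (f : int -> V), uniq s -> (forall i, G i (f i)) ->
      \sum_(i <- s) f i = 0 -> forall i, i \in s -> f i = 0).

Definition graded_sub (G : int -> V -> Prop) (N : V -> Prop) : Prop :=
  forall (x : V) (s : seq int) (f : int -> V), N x -> uniq s ->
    (forall i, G i (f i)) -> x = \sum_(i <- s) f i -> forall i, i \in s -> N (f i).
End Grading.

Definition graded_ring (R : comNzRingType) (Rg : int -> R -> Prop) : Prop :=
  graded_family Rg /\ Rg 0 1 /\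
  (forall i j (a b : R), Rg i a -> Rg j b -> Rg (i + j) (a * b)).

Record gmod (R : comNzRingType) (Rg : int -> R -> Prop) := GMod {
  gcar :> lmodType R;
  ggr : int -> gcar -> Prop;
  ggr_family : graded_family ggr;
  ggr_scale : forall i j (a : R) (x : gcar), Rg i a -> ggr j x -> ggr (i + j) (a *: x) }.
Arguments gmod : clear implicits.
Arguments ggr {R Rg} g _ _.

(* f : M -> N is an element of Hom_{Gr(R)}(M, N(d)), where N(d)_j = N_{d+j} *)
Definition ghom (R : comNzRingType) (Rg : int -> R -> Prop) (M N : gmod R Rg)
  (d : int) (f : M -> N) : Prop :=
  (forall (a : R) (x y : M), f (a *: x + y) = a *: f x + f y) /\
  (forall j (x : M), ggr M j x -> ggr N (d + j) (f x)).

(* \overline{Hom}(M,N) = \bigoplus_d Hom_{Gr(R)}(M, N(d)) is zero *)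
Definition hombar_zero (R : comNzRingType) (Rg : int -> R -> Prop) (M N : gmod R Rg) : Prop :=
  forall (d : int) (f : M -> N), ghom d f -> forall x : M, f x = 0.

Definition ginjective (R : comNzRingType) (Rg : int -> R -> Prop) (E : gmod R Rg) : Prop :=
  forall (A B : gmod R Rg) (u : A -> B) (g : A -> E),
    ghom 0 u -> injective u -> ghom 0 g ->
    exists h : B -> E, ghom 0 h /\ forall x : A, h (u x) = g x.

Definition gsubmodule (R : comNzRingType) (Rg : int -> R -> Prop) (E : gmod R Rg)
  (N : E -> Prop) : Prop :=
  N 0 /\ (forall x y, N x -> N y -> N (x + y)) /\
  (forall (a : R) x, N x -> N (a *: x)) /\ graded_sub (ggr E) N.

Definition gessential (R : comNzRingType) (Rg : int -> R -> Prop) (Q E : gmod R Rg)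
  (iota : Q -> E) : Prop :=
  ghom 0 iota /\ injective iota /\
  forall N : E -> Prop, gsubmodule N -> (exists x, N x /\ x <> 0) ->
    exists y : Q, N (iota y) /\ iota y <> 0.

Definition ginj_envelope (R : comNzRingType) (Rg : int -> R -> Prop) (Q E : gmod R Rg)
  (iota : Q -> E) : Prop :=
  gessential iota /\ ginjective E.

Definition idealP (R : comNzRingType) (P : R -> Prop) : Prop :=
  P 0 /\ (forall x y, P x -> P y -> P (x + y)) /\ (forall a x, P x -> P (a * x)).

Definition prime_idealP (R : comNzRingType) (P : R -> Prop) : Prop :=
  idealP P /\ ~ P 1 /\ (forall a b, P (a * b) -> P a \/ P b).

(* pi : R -> Q is a degree-0 surjective graded R-linear map with kernel P,
   i.e. Q is (isomorphic in Gr(R) to) the graded module R/P *)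
Definition is_quotient_by (R : comNzRingType) (Rg : int -> R -> Prop) (P : R -> Prop)
  (Q : gmod R Rg) (pi : R -> Q) : Prop :=
  (forall a b c : R, pi (a * b + c) = a *: pi b + pi c) /\
  (forall j (a : R), Rg j a -> ggr Q j (pi a)) /\
  (forall q : Q, exists a, pi a = q) /\
  (forall a, pi a = 0 <-> P a).

(* the equivalence relation defining S^{-1}M on pairs (m, s) *)
Definition loc_rel (R : comNzRingType) (S : R -> Prop) (M : lmodType R)
  (p q : M * R) : Prop :=
  exists t, S t /\ t *: (q.2 *: p.1 - p.2 *: q.1) = 0.

Definition loc_zero (R : comNzRingType) (S : R -> Prop) (M : lmodType R) : Prop :=
  forall (m : M) (s : R), S s -> loc_rel S (m, s) (0, 1).
Arguments is_quotient_by {R Rg} P Q pi.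

From HB Require Import structures.
From mathcomp Require Import all_boot all_order all_algebra.
From Stdlib Require Import ClassicalEpsilon Classical.
Set Implicit Arguments. Unset Strict Implicit. Unset Printing Implicit Defensive.
Import GRing.Theory.
Local Open Scope ring_scope.

(* If S^-1 M = 0, every homogeneous y in M is killed by a homogeneous c outside P
   (a homogeneous component of any annihilator outside P).  Such a c acts
   injectively on R/P since P is prime, hence on the essential extension
   E^g(R/P), so every graded map M -> E^g(R/P)(d) vanishes on y.
   Conversely, if S^-1 M <> 0 then some homogeneous x in M, of degree k, is not
   S-torsion, i.e. ann(x) is contained in P.  Then a x |-> a + P is a well
   defined graded map Rx -> R/P of degree -k, and injectivity of E^g(R/P)
   extends it along Rx <= M to a nonzero element of Hom-bar(M, E^g(R/P)). *)

Section Subgroup.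
Variables (V : zmodType) (A : V -> Prop).
Hypothesis hA : subgroupP A.

Lemma subgroup0 : A 0. Proof. by case: hA. Qed.

Lemma subgroupN y : A y -> A (- y).
Proof. by case: hA => h0 hB hy; rewrite -sub0r; apply: hB. Qed.

Lemma subgroupD y z : A y -> A z -> A (y + z).
Proof. by move=> hy hz; rewrite -(opprK z); apply: hA.2 => //; apply: subgroupN. Qed.

Lemma subgroup_sum (I : eqType) (s : seq I) (F : I -> V) :
  (forall i, i \in s -> A (F i)) -> A (\sum_(i <- s) F i).
Proof.
elim: s => [|a s IH] hF; first by rewrite big_nil; exact: subgroup0.
rewrite big_cons; apply: subgroupD; first by apply: hF; rewrite mem_head.
by apply: IH => i hi; apply: hF; rewrite inE hi orbT.
Qed.
End Subgroup.

Lemma ideal_subgroup (R : comNzRingType) (P : R -> Prop) : idealP P -> subgroupP P.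
Proof.
case=> h0 [hD hM]; split=> // x y hx hy.
by apply: hD => //; rewrite -mulN1r; apply: hM.
Qed.

Section GradedFamily.
Variables (V : zmodType) (G : int -> V -> Prop).
Hypothesis hG : graded_family G.

Lemma homog_sum_eq0 (k : int) (s : seq int) (g : int -> V) : uniq s ->
  (forall i, G (i + k) (g i)) -> \sum_(i <- s) g i = 0 ->
  forall i, i \in s -> g i = 0.
Proof.
move=> us hg hs i his.
have := hG.2.2 [seq j + k | j <- s] (fun j => g (j - k)) _ _ _ (i + k).
rewrite addrK; apply; last exact: map_f.
- by rewrite map_inj_uniq // => a b; apply: addIr.
- by move=> j; have := hg (j - k); rewrite subrK.
- by rewrite big_map -[RHS]hs; apply: eq_bigr => j _; rewrite addrK.
Qed.

Lemma graded_family_shift (k : int) : graded_family (fun j => G (j + k)).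
Proof.
split; [by move=> j; apply: hG.1 | split; last exact: homog_sum_eq0].
move=> y; have [s [f [us [hf ->]]]] := hG.2.1 y.
exists [seq i - k | i <- s], (fun j => f (j + k)); split.
  by rewrite map_inj_uniq // => a b; apply: addIr.
by split=> // ; rewrite big_map; apply: eq_bigr => i _; rewrite subrK.
Qed.

Lemma homog_components_eq0 (k d : int) (s : seq int) (g : int -> V) (y : V) :
  uniq s -> (forall i, G (i + k) (g i)) -> G d y -> y = \sum_(i <- s) g i ->
  forall i, i \in s -> i + k != d -> g i = 0.
Proof.
move=> us hg hy ey i his ne.
have ne' : i != d - k by apply: contra ne => /eqP ->; rewrite subrK.
have hGd j : j == d - k -> G (j + k) y by move/eqP->; rewrite subrK.
case: (boolP ((d - k) \in s)) => hd.
- have := @homog_sum_eq0 k s (fun j => if j == d - k then g j - y else g j) us _ _ i his.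
  rewrite (negbTE ne'); apply.
  + move=> j; case: eqP => [/eqP ej|_]; last exact: hg.
    by apply: (hG.1 _).2; [exact: hg | exact: hGd].
  + rewrite (eq_bigr (fun j => g j - (if j == d - k then y else 0))); last first.
      by move=> j _; case: eqP => // _; rewrite subr0.
    rewrite sumrB -ey (bigD1_seq (d - k)) //= eqxx big1 ?addr0 ?subrr //.
    by move=> j /negbTE ->.
- have := @homog_sum_eq0 k ((d - k) :: s)
    (fun j => if j == d - k then - y else g j) _ _ _ i.
  rewrite (negbTE ne') inE his orbT; apply => //.
  + by rewrite /= hd us.
  + move=> j; case: eqP => [/eqP ej|_]; last exact: hg.
    by apply: subgroupN; [exact: hG.1 | exact: hGd].
  + rewrite big_cons eqxx (eq_big_seq g) -?ey ?addNr // => j hj.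
    by case: eqP => // ej; move: hd; rewrite -ej hj.
Qed.
End GradedFamily.

Section ScaleAdditive.
Variables (R : comNzRingType) (U V : lmodType R) (f : U -> V).
Hypothesis hf : forall a x y, f (a *: x + y) = a *: f x + f y.

Lemma lin0 : f 0 = 0.
Proof.
have h := hf 1 0 0; rewrite !scale1r addr0 in h.
by apply: (addIr (f 0)); rewrite add0r -h.
Qed.

Lemma linD x y : f (x + y) = f x + f y.
Proof. by have := hf 1 x y; rewrite !scale1r. Qed.

Lemma linZ a x : f (a *: x) = a *: f x.
Proof. by have := hf a x 0; rewrite !addr0 lin0 addr0. Qed.

Lemma lin_sum (I : Type) (s : seq I) (F : I -> U) :
  f (\sum_(i <- s) F i) = \sum_(i <- s) f (F i).
Proof. by elim: s => [|a s IH]; rewrite ?big_nil ?lin0 // !big_cons linD IH. Qed.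
End ScaleAdditive.

Section Shift.
Variables (R : comNzRingType) (Rg : int -> R -> Prop) (M : gmod R Rg).

Lemma gshift_scale (k i j : int) (a : R) (x : M) :
  Rg i a -> ggr M (j + k) x -> ggr M (i + j + k) (a *: x).
Proof. by rewrite -addrA; apply: ggr_scale. Qed.

Definition gshift (k : int) : gmod R Rg :=
  GMod (graded_family_shift (ggr_family M) k) (@gshift_scale k).

Lemma ghom_gshift (N : gmod R Rg) (k d : int) (f : M -> N) :
  ghom d (f : gshift k -> N) -> ghom (d - k) f.
Proof.
case=> hf hdeg; split=> // j x hx.
by rewrite addrAC -addrA; apply: hdeg; rewrite /= subrK.
Qed.
End Shift.

Section Cyclic.
Variables (R : comNzRingType) (M : lmodType R) (x : M).

Definition in_cyclic (y : M) : bool :=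
  if excluded_middle_informative (exists a : R, y = a *: x) then true else false.

Lemma in_cyclicP y : reflect (exists a : R, y = a *: x) (in_cyclic y).
Proof. by rewrite /in_cyclic; case: excluded_middle_informative => h; constructor. Qed.

Lemma in_cyclic_closed : subsemimod_closed in_cyclic.
Proof.
split; [split|].
- by apply/in_cyclicP; exists 0; rewrite scale0r.
- move=> _ _ /in_cyclicP[a ->] /in_cyclicP[b ->].
  by apply/in_cyclicP; exists (a + b); rewrite scalerDl.
- by move=> c _ /in_cyclicP[a ->]; apply/in_cyclicP; exists (c * a); rewrite scalerA.
Qed.

HB.instance Definition _ := GRing.isSubmodClosed.Build R M in_cyclic in_cyclic_closed.

Record cyclic := Cyclic { cyclic_val :> M; _ : in_cyclic cyclic_val }.
HB.instance Definition _ := [isSub for cyclic_val].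
HB.instance Definition _ := [Choice of cyclic by <:].
HB.instance Definition _ := [SubChoice_isSubLmodule of cyclic by <:].

Lemma cyclic_coef_subproof (y : cyclic) : exists a, val y == a *: x.
Proof. by case/in_cyclicP: (valP y) => a ->; exists a. Qed.

Definition cyclic_coef (y : cyclic) : R := xchoose (cyclic_coef_subproof y).

Lemma cyclic_coefP (y : cyclic) : val y = cyclic_coef y *: x.
Proof. exact/eqP/(xchooseP (cyclic_coef_subproof y)). Qed.
End Cyclic.

Section GradedCyclic.
Variables (R : comNzRingType) (Rg : int -> R -> Prop) (M : gmod R Rg).
Variables (x : M) (k : int).
Hypotheses (hR : graded_ring Rg) (hx : ggr M k x).

Definition cyclic_gr (j : int) (y : cyclic x) : Prop := ggr M j (val y).

Lemma cyclic_gr_family : graded_family cyclic_gr.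
Proof.
have hM := ggr_family M.
split; [|split].
- move=> j; split; first exact: (hM.1 j).1.
  by move=> y z; rewrite /cyclic_gr raddfB; apply: (hM.1 j).2.
- move=> y; have [u [c [uu [hc ec]]]] := hR.1.2.1 (cyclic_coef y).
  have mem j : in_cyclic x (c (j - k) *: x) by apply/in_cyclicP; exists (c (j - k)).
  exists [seq i + k | i <- u], (fun j => Cyclic (mem j)); split.
    by rewrite map_inj_uniq // => a b; apply: addIr.
  split=> [j|]; first by rewrite /cyclic_gr /= -{1}(subrK k j); apply: ggr_scale.
  apply: val_inj; rewrite raddf_sum big_map cyclic_coefP ec scaler_suml.
  by apply: eq_bigr => i _ /=; rewrite addrK.
- move=> s f us hf hs i hi; apply: val_inj.
  by apply: (hM.2.2 s (fun j => val (f j))) => //; rewrite -raddf_sum hs.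
Qed.

Lemma cyclic_gr_scale (i j : int) (a : R) (y : cyclic x) :
  Rg i a -> cyclic_gr j y -> cyclic_gr (i + j) (a *: y).
Proof. exact: ggr_scale. Qed.

Definition gcyclic : gmod R Rg := GMod cyclic_gr_family cyclic_gr_scale.
End GradedCyclic.

Section Torsion.
Variables (R : comNzRingType) (S : R -> Prop) (M : lmodType R).

Definition torsion (m : M) : Prop := exists2 t, S t & t *: m = 0.

Lemma loc_zeroP : S 1 -> loc_zero S M <-> forall m, torsion m.
Proof.
move=> S1; split=> [hl m | ht m s _].
  by have [t [St ht]] := hl m 1 S1; exists t; rewrite // /= scale1r scaler0 subr0 in ht.
by have [t St tm] := ht m; exists t; split=> //=; rewrite scale1r scaler0 subr0.
Qed.

Hypotheses (S1 : S 1) (SM : forall a b, S a -> S b -> S (a * b)).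

Lemma torsion_sum (I : eqType) (s : seq I) (F : I -> M) :
  (forall i, i \in s -> torsion (F i)) -> torsion (\sum_(i <- s) F i).
Proof.
elim: s => [|a s IH] hF; first by exists 1; rewrite // big_nil scaler0.
have [ta Sa ea] := hF a (mem_head a s).
have [t St et] : torsion (\sum_(i <- s) F i).
  by apply: IH => i hi; apply: hF; rewrite inE hi orbT.
exists (ta * t); first exact: SM.
by rewrite big_cons scalerDr [ta * t in X in X + _]mulrC -!scalerA ea et !scaler0 addr0.
Qed.
End Torsion.

Lemma gsubmodule_annihilator (R : comNzRingType) (Rg : int -> R -> Prop)
    (E : gmod R Rg) (i : int) (c : R) :
  Rg i c -> gsubmodule (fun w : E => c *: w = 0).
Proof.
move=> hc; split; [exact: scaler0 | split; [|split]].
- by move=> w1 w2 h1 h2; rewrite scalerDr h1 h2 addr0.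
- by move=> a w h; rewrite scalerA mulrC -scalerA h scaler0.
- move=> w l g hw ul hg ew j jl.
  apply: (homog_sum_eq0 (ggr_family E) (k := i) (g := fun j => c *: g j) ul) => // [j'|].
    by rewrite addrC; apply: ggr_scale.
  by rewrite -scaler_sumr -ew.
Qed.

Section HomogAnnihilator.
Variables (R : comNzRingType) (Rg : int -> R -> Prop) (P : R -> Prop).
Hypotheses (hR : graded_ring Rg) (hP : idealP P).

Lemma homog_annihilator (M : gmod R Rg) (j : int) (y : M) (t : R) :
  ggr M j y -> ~ P t -> t *: y = 0 -> exists i c, [/\ Rg i c, ~ P c & c *: y = 0].
Proof.
move=> hy Pt ty.
have [u [c [uu [hc ec]]]] := hR.1.2.1 t.
have cy0 : forall i, i \in u -> c i *: y = 0.
  apply: (homog_sum_eq0 (ggr_family M) (k := j) (g := fun i => c i *: y) uu) => [i|].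
    exact: ggr_scale.
  by rewrite -scaler_suml -ec.
have [i [iu Pci]] : exists i, i \in u /\ ~ P (c i).
  apply: NNPP => hn; apply: Pt; rewrite ec.
  apply: (subgroup_sum (ideal_subgroup hP)) => i iu.
  by apply: NNPP => Pci; apply: hn; exists i.
by exists i, (c i); split=> //; apply: cy0.
Qed.
End HomogAnnihilator.

Section Envelope.
Variables (R : comNzRingType) (Rg : int -> R -> Prop) (P : R -> Prop).
Variables (Q E : gmod R Rg) (pi : R -> Q) (iota : Q -> E).
Hypotheses (hP : prime_idealP P) (hpi : is_quotient_by P Q pi).
Hypothesis hiota : gessential iota.

Let pi0 : pi 0 = 0 := lin0 (U := R^o) hpi.1.
Let piD a b : pi (a + b) = pi a + pi b := linD (U := R^o) hpi.1 a b.
Let piM a b : pi (a * b) = a *: pi b := linZ (U := R^o) hpi.1 a b.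
Let pi_eq0 a : pi a = 0 <-> P a := hpi.2.2.2 a.
Let iota0 : iota 0 = 0 := lin0 hiota.1.1.

Lemma quotient_eq (a b : R) : P (a - b) -> pi a = pi b.
Proof. by move=> /pi_eq0 hab; rewrite -(subrK b a) piD hab add0r. Qed.

Lemma quotient_scale_eq0 (c : R) (q : Q) : ~ P c -> c *: q = 0 -> q = 0.
Proof.
move=> Pc; have [b <-] := hpi.2.2.1 q.
rewrite -piM => /pi_eq0 Pcb; apply/pi_eq0.
by case: (hP.2.2 _ _ Pcb).
Qed.

(* Essentiality reduces the question to Q = R/P, where c acts injectively. *)
Lemma envelope_scale_eq0 (i : int) (c : R) (w : E) :
  Rg i c -> ~ P c -> c *: w = 0 -> w = 0.
Proof.
move=> hc Pc cw; apply: NNPP => w0.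
have [q [cq q0]] := hiota.2.2 _ (gsubmodule_annihilator E hc) (ex_intro _ w (conj cw w0)).
have cq0 : c *: q = 0 by apply: hiota.2.1; rewrite (linZ hiota.1.1) cq iota0.
by apply: q0; rewrite (quotient_scale_eq0 Pc cq0) iota0.
Qed.

Lemma hombar_zero_of_loc_zero (M : gmod R Rg) :
  graded_ring Rg -> loc_zero (fun r => ~ P r) M -> hombar_zero M E.
Proof.
move=> hR /(loc_zeroP _ hP.2.1) hl d f [hf _] m.
have homog0 j y : ggr M j y -> f y = 0.
  move=> hy; have [t Pt ty] := hl y.
  have [i [c [hc Pc cy]]] := homog_annihilator hR hP.1 hy Pt ty.
  by apply: (envelope_scale_eq0 hc Pc); rewrite -(linZ hf) cy (lin0 hf).
have [s [g [_ [hg ->]]]] := (ggr_family M).2.1 m.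
by rewrite (lin_sum hf) big1 // => i _; apply: homog0 (hg i).
Qed.

Section CyclicMap.
Variables (M : gmod R Rg) (x : M) (k : int).
Hypotheses (hR : graded_ring Rg) (hx : ggr M k x) (hann : forall t, t *: x = 0 -> P t).

Definition to_envelope (y : cyclic x) : E := iota (pi (cyclic_coef y)).

Lemma pi_cyclic_coef (y : cyclic x) (a : R) : val y = a *: x -> pi (cyclic_coef y) = pi a.
Proof. by rewrite cyclic_coefP => e; apply/quotient_eq/hann; rewrite scalerBl e subrr. Qed.

Lemma pi_cyclic_coef_homog (j : int) (y : cyclic x) :
  ggr M (j + k) (val y) -> ggr Q j (pi (cyclic_coef y)).
Proof.
move=> hy; have [u [c [uu [hc ec]]]] := hR.1.2.1 (cyclic_coef y).
have ey : val y = \sum_(i <- u) c i *: x by rewrite cyclic_coefP ec scaler_suml.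
have c0 := homog_components_eq0 (ggr_family M) uu (fun i => ggr_scale (hc i) hx) hy ey.
rewrite ec (lin_sum (U := R^o) hpi.1); apply: (subgroup_sum ((ggr_family Q).1 j)) => i iu.
have [->|nij] := eqVneq i j; first exact: hpi.2.1.
rewrite (quotient_eq (b := 0)) ?pi0; first exact: subgroup0 ((ggr_family Q).1 j).
by rewrite subr0; apply/hann/c0; rewrite // (inj_eq (addIr k)).
Qed.

Hypothesis hinj : ginjective E.

Lemma hombar_nonzero : exists d (f : M -> E), ghom d f /\ f x <> 0.
Proof.
pose A := gshift (gcyclic hR hx) k.
have hval : ghom 0 (val : A -> gshift M k).
  by split=> // j y; rewrite add0r.
have hg : ghom 0 (to_envelope : A -> E).
  split=> [a y z | j y hy]; last exact/hiota.1.2/pi_cyclic_coef_homog.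
  rewrite /to_envelope -hiota.1.1 -(hpi.1 a); congr iota; apply: pi_cyclic_coef.
  by rewrite [LHS]/= !cyclic_coefP scalerDl scalerA.
have [h [hh hval_h]] := hinj hval val_inj hg.
exists (0 - k), h; split; first exact: ghom_gshift hh.
have x_in : in_cyclic x x by apply/in_cyclicP; exists 1; rewrite scale1r.
have := hval_h (Cyclic x_in); rewrite /= => ->.
rewrite /to_envelope (@pi_cyclic_coef _ 1) ?scale1r // => /esym.
rewrite -iota0 => /hiota.2.1 /esym /pi_eq0.
exact: hP.2.1.
Qed.
End CyclicMap.
End Envelope.

Unset Implicit Arguments.
Set Strict Implicit.

Theorem mainTheorem10 (R : comNzRingType) (Rg : int -> R -> Prop) (P : R -> Prop)
  (M Q E : gmod R Rg) (pi : R -> Q) (iota : Q -> E) :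
  graded_ring Rg -> prime_idealP P -> graded_sub Rg P ->
  is_quotient_by P Q pi -> ginj_envelope iota ->
  (loc_zero (fun r : R => ~ P r) M <-> hombar_zero M E).
Proof.
move=> hR hP _ hpi [hiota hinj].
split=> [|hz]; first exact: (hombar_zero_of_loc_zero hP hpi hiota hR).
have SM a b : ~ P a -> ~ P b -> ~ P (a * b) by move=> Pa Pb /hP.2.2[].
apply/(loc_zeroP _ hP.2.1) => m; apply: NNPP => ntm.
have [s [g [_ [hg em]]]] := (ggr_family M).2.1 m.
have [i [_ ntg]] : exists i, i \in s /\ ~ torsion (fun r => ~ P r) (g i).
  apply: NNPP => h; apply/ntm; rewrite em; apply: (torsion_sum hP.2.1 SM) => i si.
  by apply: NNPP => ntg; apply: h; exists i.
have hann t : t *: g i = 0 -> P t.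
  by move=> tg; apply: NNPP => Pt; apply: ntg; exists t.
have [d [f [hf fg]]] := hombar_nonzero hP hpi hiota hR (hg i) hann hinj.
exact: fg (hz d f hf (g i)).
Qed.
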